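(* Let $(X,x)$ be a pointed diffeological space. The map $\alpha:\hat{T}_x(X)\to T'_x(X)$ defined by $\alpha(F)([f]+I_x^2(X))=F([f])$ is an isomorphism of vector spaces.
   Context: A diffeological space is a set $X$ together with, for every open subset $U$ of every $\mathbb{R}^n$, a set of functions $U\to X$ called plots, such that constant maps are plots, the composite of a plot with a smooth map between open subsets of Euclidean spaces is a plot, and a function which is locally a plot is a plot; smooth maps send plots to plots. A subset of $X$ is $D$-open if its preimage under every plot is open. For a diffeological space $B$, $C^\infty(B,\mathbb{R})$ carries the functional diffeology: a map $U\to C^\infty(B,\mathbb{R})$ is a plot iff its adjoint $U\times B\to\mathbb{R}$ is smooth. Let $G_x(X)=\operatorname{colim}_B C^\infty(B,\mathbb{R})$, the colimit taken in the category of diffeological spaces over all $D$-open subsets $B$ of $X$ containing $x$ (with the sub-diffeology), along restriction maps; it is a diffeological $\mathbb{R}$-algebra (germs of smooth functions at $x$) with smooth evaluation map $[f]\mapsto f(x)$. An external tangent vector at $x$ is a smooth linear map $F:G_x(X)\to\mathbb{R}$ satisfying $F([f][g])=F([f])g(x)+f(x)F([g])$; $\hat{T}_x(X)$ is the vector space of these. Let $I_x(X)$ be the kernel of evaluation with the sub-diffeology, $I_x(X)/I_x^2(X)$ the quotient vector space with the quotient diffeology, and $T'_x(X)$ the vector space of smooth linear maps $I_x(X)/I_x^2(X)\to\mathbb{R}$. *)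

From HB Require Import structures.
From mathcomp Require Import all_boot all_order all_algebra.
From mathcomp Require Import all_classical all_reals all_analysis.
Set Implicit Arguments. Unset Strict Implicit. Unset Printing Implicit Defensive.
Import Order.TTheory GRing.Theory Num.Theory.
Import numFieldNormedType.Exports.
Local Open Scope classical_set_scope.
Local Open Scope ring_scope.

Definition iterD {R : realType} {V W : normedModType R} (vs : seq V) (f : V -> W)
  : V -> W := foldr (fun v g => 'D_v g) f vs.

Definition smooth_on {R : realType} {V W : normedModType R} (U : set V) (f : V -> W)
  : Prop :=
  forall vs : seq V,
    (forall a, U a -> forall v : V, derivable (iterD vs f) a v) /\
    (forall a, U a -> {for a, continuous (iterD vs f)}).

(* Diffeological spaces.  A plot U -> X (U open in R^n) is represented by *)
(* a total map 'rV_n -> X, only its values on U mattering.            *)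

Record diffeology (R : realType) (X : Type) := Diffeology {
  plot : forall n : nat, set 'rV[R]_n -> ('rV[R]_n -> X) -> Prop;
  plot_open : forall n U p, @plot n U p -> open U;
  plot_ext : forall n U (p q : 'rV[R]_n -> X),
      plot U p -> (forall u, U u -> p u = q u) -> plot U q;
  plot_const : forall n (U : set 'rV[R]_n) (y : X), open U -> plot U (fun _ => y);
  plot_comp : forall m n (U : set 'rV[R]_m) (V : set 'rV[R]_n)
      (p : 'rV[R]_n -> X) (F : 'rV[R]_m -> 'rV[R]_n),
      plot V p -> open U -> smooth_on U F -> (forall u, U u -> V (F u)) ->
      plot U (p \o F);
  plot_local : forall n (U : set 'rV[R]_n) (p : 'rV[R]_n -> X), open U ->
      (forall u, U u -> exists W : set 'rV[R]_n,
           [/\ open W, W u, W `<=` U & plot W p]) ->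
      plot U p
}.

Section Germs.
Context {R : realType} {X : Type} (D : diffeology R X) (x : X).

Definition Dopen (A : set X) : Prop :=
  forall n (U : set 'rV[R]_n) p, plot D U p -> open [set u | U u /\ A (p u)].

Definition smooth_fun (B : set X) (f : X -> R) : Prop :=
  forall n (U : set 'rV[R]_n) p, plot D U p -> (forall u, U u -> B (p u)) ->
    smooth_on U (f \o p).

(* Q : W -> C^oo(B,R) is a plot of the functional diffeology:
   its adjoint W x B -> R is smooth (W with its standard diffeology as an
   open subset of R^n, B with the sub-diffeology, product diffeology). *)
Definition fplot (B : set X) n (W : set 'rV[R]_n) (Q : 'rV[R]_n -> X -> R) : Prop :=
  [/\ open W,
      (forall w, W w -> smooth_fun B (Q w)) &
      forall m (V : set 'rV[R]_m) (q1 : 'rV[R]_m -> 'rV[R]_n) (q2 : 'rV[R]_m -> X),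
        open V -> smooth_on V q1 -> (forall v, V v -> W (q1 v)) ->
        plot D V q2 -> (forall v, V v -> B (q2 v)) ->
        smooth_on V (fun v => Q (q1 v) (q2 v))].

(* representatives (B, f) of elements of the disjoint union of the C^oo(B,R) *)
Definition pre := (set X * (X -> R))%type.

Definition valid (a : pre) : Prop := [/\ Dopen a.1, a.1 x & smooth_fun a.1 a.2].

(* the equivalence relation generated by the restriction maps *)
Definition germ_rel (a b : pre) : Prop :=
  exists B : set X, [/\ Dopen B, B x, B `<=` a.1 `&` b.1 &
                       forall y, B y -> a.2 y = b.2 y].

Definition cls (a : pre) : set pre := [set b | valid b /\ germ_rel a b].

Definition is_germ (c : set pre) : Prop := exists a, valid a /\ c = cls a.

(* colimit diffeology on G_x(X): final diffeology for the maps C^oo(B,R) -> G_x(X)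
   (plots are maps which locally are constant or lift to a plot of some C^oo(B,R)) *)
Definition germ_plot n (U : set 'rV[R]_n) (P : 'rV[R]_n -> set pre) : Prop :=
  [/\ open U, (forall u, U u -> is_germ (P u)) &
      forall u, U u -> exists W : set 'rV[R]_n,
        [/\ open W, W u, W `<=` U &
            (exists c, forall w, W w -> P w = c) \/
            exists (B : set X) (Q : 'rV[R]_n -> X -> R),
              [/\ Dopen B, B x, fplot B W Q &
                  forall w, W w -> P w = cls (B, Q w)]]].

Definition germ_op2 (op : R -> R -> R) (c d : set pre) : set pre :=
  [set p | exists a b, [/\ valid a, valid b, c = cls a, d = cls b &
                          cls (a.1 `&` b.1, fun y => op (a.2 y) (b.2 y)) p]].
Definition germ_add := germ_op2 +%R.
Definition germ_mul := germ_op2 *%R.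
Definition germ_scale (k : R) (c : set pre) : set pre :=
  [set p | exists a, [/\ valid a, c = cls a & cls (a.1, fun y => k * a.2 y) p]].
Definition germ0 : set pre := cls (setT, fun _ => 0).

Definition germ_ev (c : set pre) : R :=
  xget 0 [set r | exists a, [/\ valid a, c = cls a & r = a.2 x]].

Definition Ix (c : set pre) : Prop := is_germ c /\ germ_ev c = 0.
Definition Ix2 (c : set pre) : Prop :=
  exists s : seq (set pre * set pre),
    (forall gh, gh \in s -> Ix gh.1 /\ Ix gh.2) /\
    c = foldr (fun gh acc => germ_add (germ_mul gh.1 gh.2) acc) germ0 s.

Definition qcls (g : set pre) : set (set pre) :=
  [set c | Ix c /\ Ix2 (germ_add c (germ_scale (-1) g))].
Definition is_q (xi : set (set pre)) : Prop := exists g, Ix g /\ xi = qcls g.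
Definition q_add (xi eta : set (set pre)) : set (set pre) :=
  [set c | exists g h, [/\ Ix g, Ix h, xi = qcls g, eta = qcls h &
                          qcls (germ_add g h) c]].
Definition q_scale (k : R) (xi : set (set pre)) : set (set pre) :=
  [set c | exists g, [/\ Ix g, xi = qcls g & qcls (germ_scale k g) c]].

(* quotient diffeology on I_x/I_x^2 (I_x with the sub-diffeology of G_x) *)
Definition q_plot n (U : set 'rV[R]_n) (Xi : 'rV[R]_n -> set (set pre)) : Prop :=
  [/\ open U, (forall u, U u -> is_q (Xi u)) &
      forall u, U u -> exists (W : set 'rV[R]_n) (P : 'rV[R]_n -> set pre),
        [/\ open W, W u, W `<=` U, germ_plot W P &
            forall w, W w -> Ix (P w) /\ Xi w = qcls (P w)]].

Definition That (F : set pre -> R) : Prop :=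
  [/\ (forall n (U : set 'rV[R]_n) P, germ_plot U P -> smooth_on U (F \o P)),
      (forall c d, is_germ c -> is_germ d -> F (germ_add c d) = F c + F d),
      (forall k c, is_germ c -> F (germ_scale k c) = k * F c) &
      (forall c d, is_germ c -> is_germ d ->
         F (germ_mul c d) = F c * germ_ev d + germ_ev c * F d)].

Definition Tprime (T : set (set pre) -> R) : Prop :=
  [/\ (forall n (U : set 'rV[R]_n) Xi, q_plot U Xi -> smooth_on U (T \o Xi)),
      (forall xi eta, is_q xi -> is_q eta -> T (q_add xi eta) = T xi + T eta) &
      (forall k xi, is_q xi -> T (q_scale k xi) = k * T xi)].

Definition alpha (F : set pre -> R) (xi : set (set pre)) : R := F (xget germ0 xi).

End Germs.

(* A tangent vector F is a derivation, so it vanishes on the constants and on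
   I_x^2; hence F is determined by its restriction to I_x, which factors through
   I_x/I_x^2.  Conversely a smooth linear T on I_x/I_x^2 extends to the germs by
   precomposing with the centering [f] |-> [f - f(x)], which is linear, smooth
   (it preserves the colimit plots) and satisfies the Leibniz rule because
   (f - f(x))(g - g(x)) lies in I_x^2. *)
From Pilot Require Import Defs.
From HB Require Import structures.
From mathcomp Require Import all_boot all_order all_algebra.
From mathcomp Require Import all_classical all_reals all_analysis.
From mathcomp Require Import ring.
Import Order.TTheory GRing.Theory Num.Theory.
Import numFieldNormedType.Exports.
Set Implicit Arguments. Unset Strict Implicit.
Local Open Scope classical_set_scope.
Local Open Scope ring_scope.

Section SmoothOn.
Context {R : realType} {V : normedModType R}.
Implicit Types (U : set V) (f g : V -> R).

Definition smooth_upto U k f := forall vs : seq V, (size vs <= k)%N ->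
  (forall a, U a -> forall v : V, derivable (Defs.iterD vs f) a v) /\
  (forall a, U a -> {for a, continuous (Defs.iterD vs f)}).

Lemma iterD_rcons vs v f : Defs.iterD (rcons vs v) f = Defs.iterD vs ('D_v f).
Proof. by rewrite /Defs.iterD foldr_rcons. Qed.

Lemma smooth_onE U f : smooth_on U f <-> forall k, smooth_upto U k f.
Proof.
split; first by move=> sf k vs _; exact: sf.
by move=> H vs; apply: (H (size vs)).
Qed.

Lemma iterD_eq_on U f g : open U -> {in U, f =1 g} ->
  forall vs, {in U, Defs.iterD vs f =1 Defs.iterD vs g}.
Proof.
move=> oU fg; elim=> [|v vs IH] y /[!inE] Uy /=; first by apply: fg; rewrite inE.
apply: near_eq_derive; apply: filterS (open_nbhs_nbhs (conj oU Uy)) => z Uz.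
by apply: IH; rewrite inE.
Qed.

Lemma smooth_upto_eq U k f g : open U -> {in U, f =1 g} ->
  smooth_upto U k f -> smooth_upto U k g.
Proof.
move=> oU fg sf vs hvs; have [d c] := sf vs hvs.
have near_fg a : U a -> {near a, Defs.iterD vs f =1 Defs.iterD vs g}.
  move=> Ua; apply: filterS (open_nbhs_nbhs (conj oU Ua)) => z Uz.
  by apply: (iterD_eq_on oU fg); rewrite inE.
split=> a Ua; first by move=> v; apply: near_eq_derivable (d a Ua v); exact: near_fg.
rewrite /prop_for /continuous_at -(iterD_eq_on oU fg) ?inE //.
exact: cvg_trans (near_eq_cvg (near_fg a Ua)) (c a Ua).
Qed.

Lemma smooth_upto0 U k f : smooth_upto U k f ->
  forall a, U a -> (forall v, derivable f a v) /\ {for a, continuous f}.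
Proof. by move=> sf a Ua; have [d c] := sf [::] isT; split; [exact: d|exact: c]. Qed.

Lemma smooth_uptoS U k f v : smooth_upto U k.+1 f -> smooth_upto U k ('D_v f).
Proof. by move=> sf vs hvs; rewrite -iterD_rcons; apply: sf; rewrite size_rcons. Qed.

Lemma smooth_upto_pred U k f : smooth_upto U k.+1 f -> smooth_upto U k f.
Proof. by move=> sf vs hvs; apply: sf; apply: leqW. Qed.

Lemma smooth_upto_intro U k f :
  (forall a, U a -> (forall v, derivable f a v) /\ {for a, continuous f}) ->
  (forall v, if k is k'.+1 then smooth_upto U k' ('D_v f) else True) ->
  smooth_upto U k f.
Proof.
move=> f_diff Df vs; case/lastP: vs => [|vs v] hs.
  by split=> a Ua; have [d c] := f_diff a Ua.
rewrite iterD_rcons; case: k Df hs => [|k] Df hs; first by rewrite size_rcons in hs.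
by apply: Df; rewrite size_rcons in hs.
Qed.

Lemma smooth_upto_cst U k (c : R) : smooth_upto U k (cst c).
Proof.
elim: k c => [|k IH] c; apply: smooth_upto_intro => //;
  do ?by move=> a _; split; [move=> v; exact: derivable_cst|exact: cst_continuous].
move=> v; have -> : 'D_v (cst c) = cst 0 by apply/funext => y; rewrite derive_cst.
exact: IH.
Qed.

Lemma smooth_upto_add U k f g : open U ->
  smooth_upto U k f -> smooth_upto U k g -> smooth_upto U k (f + g).
Proof.
move=> oU; elim: k f g => [|k IH] f g sf sg; apply: smooth_upto_intro => //;
  do ?by move=> a Ua; have [df cf] := smooth_upto0 sf Ua;
         have [dg cg] := smooth_upto0 sg Ua;
         split; [move=> v; exact: derivableD|exact: continuousD].
move=> v; apply: (@smooth_upto_eq U k ('D_v f + 'D_v g)) => //.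
  move=> y /[!inE] Uy; rewrite deriveD //.
  - by have [df _] := smooth_upto0 sf Uy.
  - by have [dg _] := smooth_upto0 sg Uy.
by apply: IH; exact: smooth_uptoS.
Qed.

Lemma smooth_upto_mul U k f g : open U ->
  smooth_upto U k f -> smooth_upto U k g -> smooth_upto U k (f * g).
Proof.
move=> oU; elim: k f g => [|k IH] f g sf sg; apply: smooth_upto_intro => //;
  do ?by move=> a Ua; have [df cf] := smooth_upto0 sf Ua;
         have [dg cg] := smooth_upto0 sg Ua;
         split; [move=> v; exact: derivableM|exact: continuousM].
move=> v; apply: (@smooth_upto_eq U k (f * 'D_v g + g * 'D_v f)) => //.
  move=> y /[!inE] Uy; rewrite deriveM //.
  - by have [df _] := smooth_upto0 sf Uy.
  - by have [dg _] := smooth_upto0 sg Uy.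
apply: smooth_upto_add => //;
  by apply: IH; [exact: smooth_upto_pred|exact: smooth_uptoS].
Qed.

Lemma smooth_on_eq U f g : open U -> {in U, f =1 g} ->
  smooth_on U f -> smooth_on U g.
Proof.
by move=> oU fg /smooth_onE sf; apply/smooth_onE => k; exact: smooth_upto_eq (sf k).
Qed.

Lemma smooth_on_cst U (c : R) : smooth_on U (cst c).
Proof. by apply/smooth_onE => k; exact: smooth_upto_cst. Qed.

Lemma smooth_on_add U f g : open U ->
  smooth_on U f -> smooth_on U g -> smooth_on U (f + g).
Proof.
move=> oU /smooth_onE sf /smooth_onE sg; apply/smooth_onE => k.
exact: smooth_upto_add.
Qed.

Lemma smooth_on_mul U f g : open U ->
  smooth_on U f -> smooth_on U g -> smooth_on U (f * g).
Proof.
move=> oU /smooth_onE sf /smooth_onE sg; apply/smooth_onE => k.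
exact: smooth_upto_mul.
Qed.

Lemma smooth_on_sub U f g : open U ->
  smooth_on U f -> smooth_on U g -> smooth_on U (f - g).
Proof.
move=> oU sf sg; apply: (@smooth_on_eq U (f + cst (-1) * g)) => //.
  by move=> y _ /=; rewrite mulN1r.
exact: smooth_on_add oU sf (smooth_on_mul oU (smooth_on_cst U (-1)) sg).
Qed.

Lemma smooth_on_local U f :
  (forall u, U u -> exists (W : set V) (g : V -> R),
     [/\ open W, W u, smooth_on W g & {in W, g =1 f}]) ->
  smooth_on U f.
Proof.
move=> loc vs; split=> a Ua; have [W [g [oW Wa /smooth_onE sg gf]]] := loc a Ua;
  have [d c] := smooth_upto_eq oW gf (sg (size vs)) (leqnn _).
- exact: d.
- exact: c.
Qed.

End SmoothOn.

Section Germs.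
Context {R : realType} {X : Type} (D : diffeology R X) (x : X).

Local Notation Dopen := (Dopen D).
Local Notation smooth_fun := (smooth_fun D).
Local Notation valid := (valid D x).
Local Notation germ_rel := (germ_rel D x).
Local Notation cls := (cls D x).
Local Notation is_germ := (is_germ D x).
Local Notation gadd := (germ_add D x).
Local Notation gmul := (germ_mul D x).
Local Notation gscale := (germ_scale D x).
Local Notation gev := (germ_ev D x).
Local Notation g0 := (germ0 D x).
Local Notation gsub c d := (gadd c (gscale (-1) d)).
Local Notation Ix := (Ix D x).
Local Notation Ix2 := (Ix2 D x).
Local Notation qcls := (qcls D x).
Local Notation alpha := (alpha D x).

Lemma Dopen_setT : Dopen setT.
Proof.
move=> n U p pl; rewrite (_ : [set u | U u /\ setT (p u)] = U).
  exact: plot_open pl.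
by apply/seteqP; split=> u /=; [case|].
Qed.

Lemma Dopen_setI A B : Dopen A -> Dopen B -> Dopen (A `&` B).
Proof.
move=> oA oB n U p pl.
rewrite (_ : [set u | U u /\ (A `&` B) (p u)] =
             [set u | U u /\ A (p u)] `&` [set u | U u /\ B (p u)]).
  by apply: openI; [exact: oA pl|exact: oB pl].
by apply/seteqP; split=> u /=; [case=> ? []|case=> -[? ?] []].
Qed.

Lemma smooth_fun_sub A B f : A `<=` B -> smooth_fun B f -> smooth_fun A f.
Proof. by move=> AB sf n U p pl inA; apply: sf pl _ => u /inA /AB. Qed.

Lemma smooth_fun_cst B (c : R) : smooth_fun B (fun _ => c).
Proof. by move=> n U p pl inB; exact: smooth_on_cst. Qed.

Lemma smooth_fun_add B f g : smooth_fun B f -> smooth_fun B g ->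
  smooth_fun B (fun y => f y + g y).
Proof.
move=> sf sg n U p pl inB.
exact: smooth_on_add (plot_open pl) (sf n U p pl inB) (sg n U p pl inB).
Qed.

Lemma smooth_fun_mul B f g : smooth_fun B f -> smooth_fun B g ->
  smooth_fun B (fun y => f y * g y).
Proof.
move=> sf sg n U p pl inB.
exact: smooth_on_mul (plot_open pl) (sf n U p pl inB) (sg n U p pl inB).
Qed.

Lemma germ_rel_sym a b : germ_rel a b -> germ_rel b a.
Proof.
by case=> B [oB Bx sB e]; exists B; split=> // [y /sB []|y /e].
Qed.

Lemma germ_rel_trans a b c : germ_rel a b -> germ_rel b c -> germ_rel a c.
Proof.
case=> B [oB Bx sB e] [B' [oB' Bx' sB' e']]; exists (B `&` B'); split=> //.
- exact: Dopen_setI.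
- by move=> y [/sB [? _] /sB' [_ ?]].
- by move=> y [yB yB']; rewrite e // e'.
Qed.

Lemma germ_rel_refl a : valid a -> germ_rel a a.
Proof. by case=> oa ax _; exists a.1; split. Qed.

Lemma cls_valid a : valid a -> cls a a.
Proof. by move=> va; split=> //; exact: germ_rel_refl. Qed.

Lemma eq_cls a b : germ_rel a b -> cls a = cls b.
Proof.
move=> r; apply/seteqP; split=> p [vp rp]; split=> //.
  exact: germ_rel_trans (germ_rel_sym r) rp.
exact: germ_rel_trans r rp.
Qed.

Lemma cls_inj a b : valid b -> cls a = cls b -> germ_rel a b.
Proof. by move=> vb e; have := cls_valid vb; rewrite -e; case. Qed.

Lemma eq_cls_on (A A' : set X) (f f' : X -> R) : Dopen A -> A x -> Dopen A' -> A' x ->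
  (forall y, A y -> A' y -> f y = f' y) -> cls (A, f) = cls (A', f').
Proof.
move=> oA Ax oA' Ax' e; apply: eq_cls; exists (A `&` A'); split=> //.
- exact: Dopen_setI.
- by move=> y [? ?]; apply: e.
Qed.

Lemma valid_Dopen a : valid a -> Dopen a.1. Proof. by case. Qed.
Lemma valid_point a : valid a -> a.1 x. Proof. by case. Qed.

Lemma valid_cst c : valid (setT, fun _ => c).
Proof. by split=> //=; [exact: Dopen_setT|exact: smooth_fun_cst]. Qed.

Lemma valid_add a b : valid a -> valid b ->
  valid (a.1 `&` b.1, fun y => a.2 y + b.2 y).
Proof.
case=> oa ax sa [ob bx sb]; split=> //=; first exact: Dopen_setI.
by apply: smooth_fun_add; [apply: smooth_fun_sub sa|apply: smooth_fun_sub sb];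
  move=> y [].
Qed.

Lemma valid_mul a b : valid a -> valid b ->
  valid (a.1 `&` b.1, fun y => a.2 y * b.2 y).
Proof.
case=> oa ax sa [ob bx sb]; split=> //=; first exact: Dopen_setI.
by apply: smooth_fun_mul; [apply: smooth_fun_sub sa|apply: smooth_fun_sub sb];
  move=> y [].
Qed.

Lemma valid_scale k a : valid a -> valid (a.1, fun y => k * a.2 y).
Proof.
by case=> oa ax sa; split=> //=; apply: smooth_fun_mul => //; exact: smooth_fun_cst.
Qed.

Lemma germ_op2_cls op a b : valid a -> valid b ->
  germ_op2 D x op (cls a) (cls b) = cls (a.1 `&` b.1, fun y => op (a.2 y) (b.2 y)).
Proof.
move=> va vb; apply/seteqP; split; last by move=> p hp; exists a, b; split.
move=> p [a' [b' [va' vb' ea eb hp]]].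
have [Ba [oBa Bax sBa ea']] := cls_inj va' ea.
have [Bb [oBb Bbx sBb eb']] := cls_inj vb' eb.
suff -> : cls (a.1 `&` b.1, fun y => op (a.2 y) (b.2 y)) =
          cls (a'.1 `&` b'.1, fun y => op (a'.2 y) (b'.2 y)) by [].
apply: eq_cls; exists (Ba `&` Bb); split.
- exact: Dopen_setI.
- by [].
- by move=> y [/sBa [? ?] /sBb [? ?]].
- by move=> y [yBa yBb] /=; rewrite ea' // eb'.
Qed.

Lemma germ_add_cls a b : valid a -> valid b ->
  gadd (cls a) (cls b) = cls (a.1 `&` b.1, fun y => a.2 y + b.2 y).
Proof. exact: germ_op2_cls. Qed.

Lemma germ_mul_cls a b : valid a -> valid b ->
  gmul (cls a) (cls b) = cls (a.1 `&` b.1, fun y => a.2 y * b.2 y).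
Proof. exact: germ_op2_cls. Qed.

Lemma germ_scale_cls k a : valid a ->
  gscale k (cls a) = cls (a.1, fun y => k * a.2 y).
Proof.
move=> va; apply/seteqP; split; last by move=> p hp; exists a; split.
move=> p [a' [va' ea hp]]; have [Ba [oBa Bax sBa ea']] := cls_inj va' ea.
suff -> : cls (a.1, fun y => k * a.2 y) = cls (a'.1, fun y => k * a'.2 y) by [].
by apply: eq_cls; exists Ba; split=> // y yB /=; rewrite ea'.
Qed.

Lemma germ_ev_cls a : valid a -> gev (cls a) = a.2 x.
Proof.
move=> va; rewrite /germ_ev; set P := (X in xget _ X).
have : P (xget 0 P) by apply: xgetPex; exists (a.2 x), a; split.
case=> a' [va' e ->]; have [B [_ Bx _ eB]] := cls_inj va' e.
by rewrite eB.
Qed.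

(* Germ identities are checked on representatives: push the operations inside
   the classes, then compare pointwise on the intersection of the domains. *)
Ltac valid_tac := solve [repeat match goal with
  | |- valid (_ `&` _, _) => first [apply: valid_add | apply: valid_mul]
  | |- valid (setT, _) => apply: valid_cst
  | |- valid (_, _) => apply: valid_scale
  | |- _ => assumption end].
Ltac push_cls := repeat first
  [ rewrite germ_add_cls; [|valid_tac|valid_tac]
  | rewrite germ_mul_cls; [|valid_tac|valid_tac]
  | rewrite germ_scale_cls; [|valid_tac] ].
Ltac dopen_tac := repeat first [eassumption | progress simpl | apply: Dopen_setI
  | apply: Dopen_setT | apply: valid_Dopen; eassumption
  | apply: valid_point; eassumption | split].
Ltac germ_ext := push_cls;
  apply: eq_cls_on; [dopen_tac|dopen_tac|dopen_tac|dopen_tac|move=> ? _ _ /=].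

Definition germ_one := cls (setT, fun _ => 1).
Local Notation one := germ_one.

Lemma is_germ_cls a : valid a -> is_germ (cls a).
Proof. by move=> va; exists a. Qed.

Lemma is_germ0 : is_germ g0. Proof. exact/is_germ_cls/valid_cst. Qed.
Lemma is_germ1 : is_germ one. Proof. exact/is_germ_cls/valid_cst. Qed.

Lemma is_germ_add c d : is_germ c -> is_germ d -> is_germ (gadd c d).
Proof. by move=> [a [va ->]] [b [vb ->]]; push_cls; apply: is_germ_cls; valid_tac. Qed.

Lemma is_germ_mul c d : is_germ c -> is_germ d -> is_germ (gmul c d).
Proof. by move=> [a [va ->]] [b [vb ->]]; push_cls; apply: is_germ_cls; valid_tac. Qed.

Lemma is_germ_scale k c : is_germ c -> is_germ (gscale k c).
Proof. by move=> [a [va ->]]; push_cls; apply: is_germ_cls; valid_tac. Qed.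

Lemma germ_addA c d e : is_germ c -> is_germ d -> is_germ e ->
  gadd (gadd c d) e = gadd c (gadd d e).
Proof. by move=> [a [va ->]] [b [vb ->]] [f [vf ->]]; germ_ext; ring. Qed.

Lemma germ_add0 d : is_germ d -> gadd g0 d = d.
Proof. by move=> [a [va ->]]; rewrite /germ0; germ_ext; ring. Qed.

Lemma germ_addr0 d : is_germ d -> gadd d g0 = d.
Proof. by move=> [a [va ->]]; rewrite /germ0; germ_ext; ring. Qed.

Lemma germ_scale0 k : gscale k g0 = g0.
Proof. by rewrite /germ0; germ_ext; ring. Qed.

Lemma germ_scaleD k c d : is_germ c -> is_germ d ->
  gscale k (gadd c d) = gadd (gscale k c) (gscale k d).
Proof. by move=> [a [va ->]] [b [vb ->]]; germ_ext; ring. Qed.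

Lemma germ_scale_mul k c d : is_germ c -> is_germ d ->
  gscale k (gmul c d) = gmul (gscale k c) d.
Proof. by move=> [a [va ->]] [b [vb ->]]; germ_ext; ring. Qed.

Lemma germ_mul1 : gmul one one = one.
Proof. by rewrite /germ_one; germ_ext; ring. Qed.

Lemma germ_subgg c : is_germ c -> gsub c c = g0.
Proof. by move=> [a [va ->]]; rewrite /germ0; germ_ext; ring. Qed.

Lemma germ_subr0 c : is_germ c -> gsub c g0 = c.
Proof. by move=> [a [va ->]]; rewrite /germ0; germ_ext; ring. Qed.

Lemma germ_sub_trans c d e : is_germ c -> is_germ d -> is_germ e ->
  gsub c e = gadd (gsub c d) (gsub d e).
Proof. by move=> [a [va ->]] [b [vb ->]] [f [vf ->]]; germ_ext; ring. Qed.

Lemma germ_sub_sub c d e : is_germ c -> is_germ d -> is_germ e ->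
  gsub c d = gadd (gsub c e) (gscale (-1) (gsub d e)).
Proof. by move=> [a [va ->]] [b [vb ->]] [f [vf ->]]; germ_ext; ring. Qed.

Lemma germ_subDD a b c d : is_germ a -> is_germ b -> is_germ c -> is_germ d ->
  gsub (gadd a b) (gadd c d) = gadd (gsub a c) (gsub b d).
Proof.
by move=> [a1 [va1 ->]] [b1 [vb1 ->]] [c1 [vc1 ->]] [d1 [vd1 ->]]; germ_ext; ring.
Qed.

Lemma germ_subZZ k a c : is_germ a -> is_germ c ->
  gsub (gscale k a) (gscale k c) = gscale k (gsub a c).
Proof. by move=> [a1 [va1 ->]] [c1 [vc1 ->]]; germ_ext; ring. Qed.

Lemma germ_evD c d : is_germ c -> is_germ d -> gev (gadd c d) = gev c + gev d.
Proof. by move=> [a [va ->]] [b [vb ->]]; push_cls; rewrite !germ_ev_cls //; valid_tac. Qed.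

Lemma germ_evM c d : is_germ c -> is_germ d -> gev (gmul c d) = gev c * gev d.
Proof. by move=> [a [va ->]] [b [vb ->]]; push_cls; rewrite !germ_ev_cls //; valid_tac. Qed.

Lemma germ_evZ k c : is_germ c -> gev (gscale k c) = k * gev c.
Proof. by move=> [a [va ->]]; push_cls; rewrite !germ_ev_cls //; valid_tac. Qed.

Lemma germ_ev0 : gev g0 = 0. Proof. by rewrite germ_ev_cls //; valid_tac. Qed.
Lemma germ_ev1 : gev one = 1. Proof. by rewrite germ_ev_cls //; valid_tac. Qed.

Lemma Ix_add c d : Ix c -> Ix d -> Ix (gadd c d).
Proof.
move=> [gc ec] [gd ed].
by split; [exact: is_germ_add|rewrite germ_evD // ec ed addr0].
Qed.

Lemma Ix_scale k c : Ix c -> Ix (gscale k c).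
Proof.
by move=> [gc ec]; split; [exact: is_germ_scale|rewrite germ_evZ // ec mulr0].
Qed.

Lemma Ix_mul c d : Ix c -> is_germ d -> Ix (gmul c d).
Proof.
by move=> [gc ec] gd; split; [exact: is_germ_mul|rewrite germ_evM // ec mul0r].
Qed.

Lemma Ix0 : Ix g0. Proof. by split; [exact: is_germ0|exact: germ_ev0]. Qed.

Definition sum_products (s : seq (set (@pre R X) * set (@pre R X))) :=
  foldr (fun gh acc => gadd (gmul gh.1 gh.2) acc) g0 s.

Definition Ix_pairs (s : seq (set (@pre R X) * set (@pre R X))) :=
  forall gh, gh \in s -> Ix gh.1 /\ Ix gh.2.

Lemma Ix_pairs_cons gh s : Ix_pairs (gh :: s) -> [/\ Ix gh.1, Ix gh.2 & Ix_pairs s].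
Proof.
move=> h; have [h1 h2] := h gh (mem_head _ _); split=> // gh' hin.
by apply: h; rewrite inE hin orbT.
Qed.

Lemma is_germ_sum_products s : Ix_pairs s -> is_germ (sum_products s).
Proof.
elim: s => [|gh s IH] /=; first by move=> _; exact: is_germ0.
case/Ix_pairs_cons=> [[g1 _] [g2 _] ok].
by apply: is_germ_add; [exact: is_germ_mul|exact: IH].
Qed.

Lemma sum_products_cat s1 s2 : Ix_pairs (s1 ++ s2) ->
  sum_products (s1 ++ s2) = gadd (sum_products s1) (sum_products s2).
Proof.
elim: s1 => [|gh s1 IH] /= ok.
  by rewrite germ_add0 //; exact: is_germ_sum_products.
have [[g1 _] [g2 _] ok'] := Ix_pairs_cons ok.
have ok1 : Ix_pairs s1 by move=> u hu; apply: ok'; rewrite mem_cat hu.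
have ok2 : Ix_pairs s2 by move=> u hu; apply: ok'; rewrite mem_cat hu orbT.
rewrite IH // germ_addA //; first exact: is_germ_mul.
  exact: is_germ_sum_products.
exact: is_germ_sum_products.
Qed.

Lemma Ix2_0 : Ix2 g0. Proof. by exists [::]. Qed.

Lemma Ix2_mul g h : Ix g -> Ix h -> Ix2 (gmul g h).
Proof.
move=> ig ih; exists [:: (g, h)]; split; first by move=> u; rewrite inE => /eqP ->.
by rewrite /= germ_addr0 //; apply: is_germ_mul; [exact: ig.1|exact: ih.1].
Qed.

Lemma Ix2_add c d : Ix2 c -> Ix2 d -> Ix2 (gadd c d).
Proof.
move=> [s1 [ok1 ->]] [s2 [ok2 ->]].
have ok : Ix_pairs (s1 ++ s2) by move=> u; rewrite mem_cat => /orP [/ok1|/ok2].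
by exists (s1 ++ s2); split=> //; exact: (esym (sum_products_cat ok)).
Qed.

Lemma Ix2_scale k c : Ix2 c -> Ix2 (gscale k c).
Proof.
move=> [s [ok ->]]; exists [seq (gscale k gh.1, gh.2) | gh <- s]; split.
  move=> u /mapP [gh hin ->] /=; have [h1 h2] := ok gh hin.
  by split=> //; exact: Ix_scale.
elim: s ok => [|gh s IH] ok /=; first by rewrite germ_scale0.
have [[g1 _] [g2 _] ok'] := Ix_pairs_cons ok.
rewrite -IH // germ_scaleD ?germ_scale_mul //; first exact: is_germ_mul.
exact: is_germ_sum_products.
Qed.

Lemma qcls_refl g : Ix g -> qcls g g.
Proof. by move=> ig; split=> //; rewrite germ_subgg; [exact: Ix2_0|exact: ig.1]. Qed.

Lemma eq_qcls g g' : Ix g -> Ix g' -> Ix2 (gsub g' g) -> qcls g' = qcls g.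
Proof.
move=> ig ig' h; apply/seteqP; split=> d [id hd]; split=> //.
  rewrite (@germ_sub_trans d g' g); [|exact: id.1|exact: ig'.1|exact: ig.1].
  exact: Ix2_add.
rewrite (@germ_sub_sub d g' g); [|exact: id.1|exact: ig'.1|exact: ig.1].
by apply: Ix2_add => //; exact: Ix2_scale.
Qed.

Lemma qcls_inj g g' : Ix g' -> qcls g' = qcls g -> Ix2 (gsub g' g).
Proof. by move=> ig' e; have := qcls_refl ig'; rewrite e; case. Qed.

Lemma q_add_qcls g h : Ix g -> Ix h -> q_add D x (qcls g) (qcls h) = qcls (gadd g h).
Proof.
move=> ig ih; apply/seteqP; split; last by move=> c hc; exists g, h; split.
move=> c [g' [h' [ig' ih' eg eh hc]]].
suff <- : qcls (gadd g' h') = qcls (gadd g h) by [].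
apply: eq_qcls; [exact: Ix_add|exact: Ix_add|].
rewrite germ_subDD; [|exact: ig'.1|exact: ih'.1|exact: ig.1|exact: ih.1].
by apply: Ix2_add; apply: qcls_inj.
Qed.

Lemma q_scale_qcls k g : Ix g -> q_scale D x k (qcls g) = qcls (gscale k g).
Proof.
move=> ig; apply/seteqP; split; last by move=> c hc; exists g; split.
move=> c [g' [ig' eg hc]].
suff <- : qcls (gscale k g') = qcls (gscale k g) by [].
apply: eq_qcls; [exact: Ix_scale|exact: Ix_scale|].
rewrite germ_subZZ; [|exact: ig'.1|exact: ig.1].
by apply: Ix2_scale; apply: qcls_inj.
Qed.

Definition germ_center c := gadd c (gscale (- gev c) one).

Lemma Ix_germ_center c : is_germ c -> Ix (germ_center c).
Proof.
move=> gc; have g1 : is_germ (gscale (- gev c) one) by exact/is_germ_scale/is_germ1.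
split; first exact: is_germ_add.
by rewrite germ_evD // germ_evZ ?germ_ev1 ?mulr1 ?addrN //; exact: is_germ1.
Qed.

Lemma germ_center_Ix g : Ix g -> germ_center g = g.
Proof.
by move=> [[a [va ->]] ev0]; rewrite /germ_center ev0 /germ_one; germ_ext; ring.
Qed.

Lemma germ_center_decomp c : is_germ c ->
  c = gadd (germ_center c) (gscale (gev c) one).
Proof. by move=> [a [va ->]]; rewrite /germ_center /germ_one; germ_ext; ring. Qed.

Lemma germ_centerD c d : is_germ c -> is_germ d ->
  germ_center (gadd c d) = gadd (germ_center c) (germ_center d).
Proof.
move=> gc gd; rewrite /germ_center (germ_evD gc gd).
by case: gc gd => [a [va ->]] [b [vb ->]]; rewrite /germ_one; germ_ext; ring.
Qed.

Lemma germ_centerZ k c : is_germ c ->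
  germ_center (gscale k c) = gscale k (germ_center c).
Proof.
move=> gc; rewrite /germ_center (germ_evZ k gc).
by case: gc => [a [va ->]]; rewrite /germ_one; germ_ext; ring.
Qed.

Lemma germ_centerM c d : is_germ c -> is_germ d ->
  germ_center (gmul c d) =
  gadd (gmul (germ_center c) (germ_center d))
       (gadd (gscale (gev c) (germ_center d)) (gscale (gev d) (germ_center c))).
Proof.
move=> gc gd; rewrite /germ_center (germ_evM gc gd).
by case: gc gd => [a [va ->]] [b [vb ->]]; rewrite /germ_one; germ_ext; ring.
Qed.

Lemma germ_center_cls B f : valid (B, f) ->
  germ_center (cls (B, f)) = cls (B, fun y => f y - f x).
Proof.
move=> va; rewrite /germ_center (germ_ev_cls va) /germ_one; case: (va) => /= oB Bx _.
by germ_ext; ring.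
Qed.

Section TangentVector.
Variable F : set (@pre R X) -> R.
Hypothesis hF : That D x F.

Lemma That_add c d : is_germ c -> is_germ d -> F (gadd c d) = F c + F d.
Proof. by case: hF => _ h _ _; exact: h. Qed.

Lemma That_scale k c : is_germ c -> F (gscale k c) = k * F c.
Proof. by case: hF => _ _ h _; exact: h. Qed.

Lemma That_mul c d : is_germ c -> is_germ d ->
  F (gmul c d) = F c * gev d + gev c * F d.
Proof. by case: hF => _ _ _ h; exact: h. Qed.

Lemma That_germ0 : F g0 = 0.
Proof. by rewrite -(germ_scale0 0) That_scale ?mul0r //; exact: is_germ0. Qed.

Lemma That_one : F one = 0.
Proof.
have := That_mul is_germ1 is_germ1.
rewrite germ_mul1 germ_ev1 mulr1 mul1r => /(congr1 (fun z => z - F one)).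
by rewrite subrr addrK.
Qed.

Lemma That_Ix2 c : Ix2 c -> F c = 0.
Proof.
case=> s [ok ->]; elim: s ok => [|gh s IH] ok /=; first exact: That_germ0.
have [[g1 e1] [g2 e2] ok'] := Ix_pairs_cons ok.
rewrite That_add; [|exact: is_germ_mul|exact: is_germ_sum_products].
by rewrite That_mul // e1 e2 IH // !mulr0 mul0r !addr0.
Qed.

Lemma That_qcls g c : Ix g -> qcls g c -> F c = F g.
Proof.
move=> ig [ic /That_Ix2]; rewrite That_add; [|exact: ic.1|].
  by rewrite That_scale ?mulN1r; [move/eqP; rewrite subr_eq0 => /eqP|exact: ig.1].
exact/is_germ_scale/ig.1.
Qed.

Lemma alpha_qcls g : Ix g -> alpha F (qcls g) = F g.
Proof.
move=> ig; apply: That_qcls => //.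
by apply: xgetPex; exists g; exact: qcls_refl.
Qed.

Lemma alpha_Tprime : Tprime D x (alpha F).
Proof.
split.
- move=> n U Xi [oU _ loc]; apply: smooth_on_local => u Uu.
  have [W [P [oW Wu WU gp e]]] := loc u Uu.
  exists W, (F \o P); split=> //; first by case: hF => sF _ _ _; exact: sF gp.
  by move=> w /[!inE] Ww /=; have [iP ->] := e w Ww; rewrite alpha_qcls.
- move=> _ _ [g [ig ->]] [h [ih ->]].
  rewrite q_add_qcls // !alpha_qcls //; last exact: Ix_add.
  exact: That_add ig.1 ih.1.
- move=> k _ [g [ig ->]].
  rewrite q_scale_qcls // !alpha_qcls //; last exact: Ix_scale.
  exact: That_scale ig.1.
Qed.

End TangentVector.

Lemma That_eq F1 F2 : That D x F1 -> That D x F2 ->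
  (forall xi, is_q D x xi -> alpha F1 xi = alpha F2 xi) ->
  forall c, is_germ c -> F1 c = F2 c.
Proof.
move=> h1 h2 ha c gc; have ig := Ix_germ_center gc.
have g1 : is_germ (gscale (gev c) one) by exact/is_germ_scale/is_germ1.
rewrite (germ_center_decomp gc) (That_add h1 ig.1 g1) (That_add h2 ig.1 g1).
rewrite (That_scale h1 _ is_germ1) (That_scale h2 _ is_germ1).
rewrite (That_one h1) (That_one h2) -(alpha_qcls h1 ig) -(alpha_qcls h2 ig) ha //.
by exists (germ_center c).
Qed.

Lemma fplot_sub_ev B n (W : set 'rV[R]_n) Q : B x -> fplot D B W Q ->
  fplot D B W (fun w y => Q w y - Q w x).
Proof.
move=> Bx [oW sQ pQ]; split=> // [w Ww|m V q1 q2 oV sq1 q1W pl q2B].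
  by apply: smooth_fun_add; [exact: sQ|exact: smooth_fun_cst].
apply: (smooth_on_sub (f := fun v => Q (q1 v) (q2 v)) (g := fun v => Q (q1 v) x)) => //.
  exact: pQ.
exact: pQ m V q1 (fun _ => x) oV sq1 q1W (plot_const D x oV) (fun _ _ => Bx).
Qed.

Lemma germ_plot_center n (U : set 'rV[R]_n) P : germ_plot D x U P ->
  q_plot D x U (fun u => qcls (germ_center (P u))).
Proof.
move=> [oU isg loc]; split=> // [u Uu|u Uu].
  by exists (germ_center (P u)); split=> //; exact: Ix_germ_center (isg u Uu).
have [W [oW Wu WU hP]] := loc u Uu.
exists W, (fun w => germ_center (P w)); split=> // [|w Ww].
  split=> // [w Ww|w Ww]; first exact: (Ix_germ_center (isg w (WU w Ww))).1.
  exists W; split=> //; case: hP => [[c hc]|[B [Q [oB Bx fp hPQ]]]].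
    by left; exists (germ_center c) => w' Ww'; rewrite hc.
  right; exists B, (fun w y => Q w y - Q w x); split=> //; first exact: fplot_sub_ev.
  move=> w' Ww'; rewrite hPQ // germ_center_cls //.
  by case: fp => _ sQ _; split=> //; exact: sQ.
by split=> //; exact: Ix_germ_center (isg w (WU w Ww)).
Qed.

Section Cotangent.
Variable T : set (set (@pre R X)) -> R.
Hypothesis hT : Tprime D x T.

Lemma Tprime_add g h : Ix g -> Ix h -> T (qcls (gadd g h)) = T (qcls g) + T (qcls h).
Proof.
move=> ig ih; rewrite -q_add_qcls //.
by case: hT => _ hadd _; apply: hadd; [exists g|exists h].
Qed.

Lemma Tprime_scale k g : Ix g -> T (qcls (gscale k g)) = k * T (qcls g).
Proof. by move=> ig; rewrite -q_scale_qcls //; case: hT => _ _ hZ; apply: hZ; exists g. Qed.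

Lemma Tprime_mul g h : Ix g -> Ix h -> T (qcls (gmul g h)) = 0.
Proof.
move=> ig ih; have im : Ix (gmul g h) by apply: Ix_mul ih.1.
rewrite (eq_qcls Ix0 im); last by rewrite germ_subr0; [exact: Ix2_mul|exact: im.1].
by rewrite -(germ_scale0 0) Tprime_scale ?mul0r //; exact: Ix0.
Qed.

Definition alpha_inv c := T (qcls (germ_center c)).

Lemma alpha_inv_That : That D x alpha_inv.
Proof.
split.
- move=> n U P gp; case: hT => sT _ _.
  exact: sT n U _ (germ_plot_center gp).
- move=> c d gc gd; rewrite /alpha_inv germ_centerD //.
  exact: Tprime_add (Ix_germ_center gc) (Ix_germ_center gd).
- move=> k c gc; rewrite /alpha_inv germ_centerZ //.
  exact: Tprime_scale (Ix_germ_center gc).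
- move=> c d gc gd; rewrite /alpha_inv germ_centerM //.
  have ic := Ix_germ_center gc; have id := Ix_germ_center gd.
  rewrite Tprime_add; [|exact: Ix_mul id.1|exact: Ix_add (Ix_scale _ id) (Ix_scale _ ic)].
  rewrite Tprime_add ?Tprime_scale ?Tprime_mul //; try exact: Ix_scale.
  by rewrite add0r addrC mulrC.
Qed.

Lemma alpha_alpha_inv xi : is_q D x xi -> alpha alpha_inv xi = T xi.
Proof.
move=> [g [ig ->]]; rewrite (alpha_qcls alpha_inv_That ig) /alpha_inv.
by rewrite germ_center_Ix.
Qed.

End Cotangent.

End Germs.

Theorem proposition3p11 (R : realType) (X : Type) (D : diffeology R X) (x : X) :
  (* alpha maps That_x(X) into T'_x(X) *)
  (forall F, That D x F -> Tprime D x (alpha D x F)) /\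
  (* alpha is linear *)
  (forall (k : R) F1 F2, That D x F1 -> That D x F2 ->
     forall xi, is_q D x xi ->
       alpha D x (fun c => k * F1 c + F2 c) xi
       = k * alpha D x F1 xi + alpha D x F2 xi) /\
  (* alpha is injective *)
  (forall F1 F2, That D x F1 -> That D x F2 ->
     (forall xi, is_q D x xi -> alpha D x F1 xi = alpha D x F2 xi) ->
     forall c, is_germ D x c -> F1 c = F2 c) /\
  (* alpha is surjective *)
  (forall T, Tprime D x T ->
     exists F, That D x F /\ forall xi, is_q D x xi -> alpha D x F xi = T xi).
Proof.
split; first exact: alpha_Tprime.
split; first by [].
split; first exact: That_eq.
move=> T hT; exists (alpha_inv D x T).
by split; [exact: alpha_inv_That|exact: alpha_alpha_inv].
Qed.
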